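(* Let $b,m>1$ be integers with $\gcd(b,m)=1$, and let $\frac{1}{m}=(0.\,a_1a_2\cdots a_i\cdots)_b$ be the base-$b$ expansion of $\frac1m$ (so $\frac1m=\sum_{i\ge1}a_ib^{-i}$ with digits $a_i\in\{0,\dots,b-1\}$). Then for every positive integer $t$, the base-$(b+mt)$ expansion of $\frac1m$ is \[ \tfrac{1}{m}=(0.\,a'_1a'_2\cdots a'_i\cdots)_{b+mt}, \] where for each $i\ge1$, $a'_i=a_i+t\,k_i$ with $k_i=(b^{i-1}\bmod m)$.
   Context: For integers $x$ and $m>0$, $x \bmod m$ denotes the least nonnegative residue of $x$ modulo $m$. The notation $(0.\,c_1c_2\cdots)_B$ denotes the number $\sum_{i\ge1}c_iB^{-i}$ with digits $c_i\in\{0,\dots,B-1\}$. *)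

From Stdlib Require Import Reals Arith.
Open Scope R_scope.

(* a : nat -> nat is a base-B digit sequence (digits a 1, a 2, ...; a 0 unused)
   with (0. a_1 a_2 ...)_B = x, i.e. x = sum_{i>=1} a_i B^{-i}. *)
Definition is_base_expansion (B : nat) (a : nat -> nat) (x : R) : Prop :=
  (forall i : nat, (1 <= i)%nat -> (a i < B)%nat) /\
  infinite_sum (fun n : nat => INR (a (S n)) / (INR B) ^ (S n)) x.

From Stdlib Require Import Reals Arith Lia Lra.
Open Scope R_scope.

(* Long division computes the base-B expansion of 1/m: its first n digits, read as an
   integer, are floor(B^n/m), so its i-th digit is floor(B r/m) with r = B^(i-1) mod m.
   When gcd(B, m) = 1 this is the only expansion: the n-digit truncation of any expansion
   lies in [1/m - B^-n, 1/m], which pins it to floor(B^n/m) because B^n/m is never an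
   integer. As (b+mt)^(i-1) = b^(i-1) mod m, the same remainders r occur in base b+mt,
   and floor((b+mt) r/m) = floor(b r/m) + t r. *)

Lemma INR_div_le_iff (p x q y : nat) : (0 < x)%nat -> (0 < y)%nat ->
  INR p / INR x <= INR q / INR y <-> (p * y <= q * x)%nat.
Proof.
  intros Hx Hy.
  apply lt_0_INR in Hx; apply lt_0_INR in Hy.
  assert (Ep : INR p / INR x * (INR x * INR y) = INR (p * y))
    by (rewrite mult_INR; field; lra).
  assert (Eq : INR q / INR y * (INR x * INR y) = INR (q * x))
    by (rewrite mult_INR; field; lra).
  split; intro H.
  - apply INR_le; rewrite <- Ep, <- Eq.
    apply Rmult_le_compat_r; [nra | exact H].
  - apply Rmult_le_reg_r with (INR x * INR y); [nra|].
    rewrite Ep, Eq; apply le_INR, H.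
Qed.

Lemma Un_cv_const (c : R) : Un_cv (fun _ => c) c.
Proof. intros e He; exists O; intros n _; unfold Rdist; rewrite Rminus_diag, Rabs_R0; lra. Qed.

Lemma Un_cv_le_bounds (u : nat -> R) (lo hi l : R) :
  Un_cv u l -> (forall n, lo <= u n <= hi) -> lo <= l <= hi.
Proof.
  intros Hu Hb; split.
  - apply (@Rle_cv_lim (fun _ => lo) u); [apply Hb | apply Un_cv_const | exact Hu].
  - apply (@Rle_cv_lim u (fun _ => hi)); [apply Hb | exact Hu | apply Un_cv_const].
Qed.

Lemma Un_cv_pow_inv_squeeze (B l : R) (u : nat -> R) :
  1 < B -> (forall n, u n <= l <= u n + / B ^ n) -> Un_cv u l.
Proof.
  intros HB Hu e He.
  destruct (pow_lt_1_zero (/ B)) with (y := e) as [N HN]; [|exact He|].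
  { rewrite Rabs_pos_eq by (left; apply Rinv_0_lt_compat; lra).
    rewrite <- Rinv_1; apply Rinv_lt_contravar; lra. }
  exists N; intros n Hn; unfold Rdist.
  specialize (HN n Hn); specialize (Hu n).
  rewrite pow_inv, Rabs_pos_eq in HN by (left; apply Rinv_0_lt_compat, pow_lt; lra).
  rewrite Rabs_minus_sym, Rabs_pos_eq; lra.
Qed.

Fixpoint digits_value (c : nat -> nat) (B n : nat) : nat :=
  match n with
  | O => O
  | S k => B * digits_value c B k + c (S k)
  end.

Lemma partial_sum_digits_value (c : nat -> nat) (B n : nat) : (0 < B)%nat ->
  sum_f_R0 (fun k => INR (c (S k)) / INR B ^ S k) n
  = INR (digits_value c B (S n)) / INR (B ^ S n).
Proof.
  intros HB; apply lt_0_INR in HB.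
  assert (Hpow : forall k, INR B ^ k <> 0) by (intro k; apply pow_nonzero; lra).
  rewrite pow_INR.
  induction n as [|n IH].
  - simpl; rewrite plus_INR, mult_INR; simpl; field; lra.
  - rewrite tech5, IH.
    change (digits_value c B (S (S n))) with (B * digits_value c B (S n) + c (S (S n)))%nat.
    change (INR B ^ S (S n)) with (INR B * INR B ^ S n).
    rewrite plus_INR, mult_INR.
    field; split; [apply Hpow | lra].
Qed.

Lemma digits_value_extend_bounds (c : nat -> nat) (B n k : nat) :
  (forall i, (1 <= i)%nat -> (c i < B)%nat) ->
  (B ^ k * digits_value c B n <= digits_value c B (n + k) < B ^ k * S (digits_value c B n))%nat.
Proof.
  intros Hc; induction k as [|k IH].
  - rewrite Nat.add_0_r; simpl; lia.
  - rewrite Nat.add_succ_r; simpl digits_value.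
    specialize (Hc (S (n + k)) ltac:(lia)).
    rewrite Nat.pow_succ_r'. nia.
Qed.

Definition recip_digit (m B i : nat) : nat := (B * (B ^ (i - 1) mod m) / m)%nat.

Lemma digits_value_recip_digit (m B n : nat) : (1 < m)%nat ->
  digits_value (recip_digit m B) B n = (B ^ n / m)%nat.
Proof.
  intros Hm; induction n as [|n IH].
  - simpl; rewrite Nat.div_small; lia.
  - simpl digits_value; rewrite IH; unfold recip_digit.
    replace (S n - 1)%nat with n by lia.
    replace (B ^ S n)%nat with (B * (B ^ n mod m) + B * (B ^ n / m) * m)%nat
      by (symmetry; rewrite Nat.pow_succ_r', (Nat.div_mod_eq (B ^ n) m) at 1; ring).
    rewrite Nat.div_add by lia; lia.
Qed.

Lemma recip_digit_lt (m B i : nat) : (0 < m)%nat -> (0 < B)%nat -> (recip_digit m B i < B)%nat.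
Proof.
  intros Hm HB; unfold recip_digit.
  apply Nat.Div0.div_lt_upper_bound.
  pose proof (Nat.mod_upper_bound (B ^ (i - 1)) m ltac:(lia)); nia.
Qed.

Lemma pow_add_mul_mod (b m t n : nat) : ((b + m * t) ^ n mod m = b ^ n mod m)%nat.
Proof.
  induction n as [|n IH]; [reflexivity|].
  rewrite !Nat.pow_succ_r', Nat.Div0.mul_mod, IH, (Nat.mul_comm m t), Nat.Div0.mod_add.
  symmetry; apply Nat.Div0.mul_mod.
Qed.

Lemma recip_digit_add_mul (m b t i : nat) : (0 < m)%nat ->
  recip_digit m (b + m * t) i = (recip_digit m b i + t * (b ^ (i - 1) mod m))%nat.
Proof.
  intros Hm; unfold recip_digit; rewrite pow_add_mul_mod.
  replace ((b + m * t) * (b ^ (i - 1) mod m))%nat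
    with (b * (b ^ (i - 1) mod m) + t * (b ^ (i - 1) mod m) * m)%nat by ring.
  apply Nat.div_add; lia.
Qed.

Lemma not_divide_pow_coprime (b m n : nat) :
  (1 < m)%nat -> Nat.gcd b m = 1%nat -> ~ Nat.divide m (b ^ n).
Proof.
  intros Hm Hg; induction n as [|n IH]; intro Hdiv.
  - apply Nat.divide_1_r in Hdiv; lia.
  - rewrite Nat.pow_succ_r' in Hdiv.
    apply IH, (Nat.gauss m b); [exact Hdiv | rewrite Nat.gcd_comm; exact Hg].
Qed.

Lemma recip_div_bounds (m X : nat) : (0 < m)%nat -> (0 < X)%nat ->
  INR (X / m) / INR X <= 1 / INR m <= INR (S (X / m)) / INR X.
Proof.
  intros Hm HX; change (1 / INR m) with (INR 1 / INR m).
  pose proof (Nat.div_mod_eq X m); pose proof (Nat.mod_upper_bound X m ltac:(lia)).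
  split; apply INR_div_le_iff; lia.
Qed.

Lemma is_base_expansion_ext (B : nat) (a a' : nat -> nat) (x : R) :
  (forall i, (1 <= i)%nat -> a i = a' i) ->
  is_base_expansion B a x -> is_base_expansion B a' x.
Proof.
  intros Ha [Hdig Hsum]; split.
  - intros i Hi; rewrite <- Ha by exact Hi; apply Hdig, Hi.
  - unfold infinite_sum in *.
    apply Un_cv_ext with (2 := Hsum); intro n.
    apply sum_eq; intros k _; rewrite Ha by lia; reflexivity.
Qed.

Lemma is_base_expansion_recip (B m : nat) : (1 < B)%nat -> (1 < m)%nat ->
  is_base_expansion B (recip_digit m B) (1 / INR m).
Proof.
  intros HB Hm; split.
  - intros i _; apply recip_digit_lt; lia.
  - set (w := fun n => INR (B ^ n / m) / INR (B ^ n)).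
    assert (Hw : Un_cv w (1 / INR m)).
    { apply Un_cv_pow_inv_squeeze with (INR B); [apply lt_1_INR, HB|].
      intro n; assert (HX : (0 < B ^ n)%nat) by (apply Nat.neq_0_lt_0, Nat.pow_nonzero; lia).
      pose proof (recip_div_bounds m (B ^ n) ltac:(lia) HX) as Hb.
      unfold w; rewrite S_INR, pow_INR in *; unfold Rdiv in *; lra. }
    apply Un_cv_ext with (2 := CV_shift' w 1 _ Hw); intro n.
    rewrite partial_sum_digits_value, digits_value_recip_digit, Nat.add_1_r by lia.
    reflexivity.
Qed.

Lemma base_expansion_digits_value_bounds (B : nat) (a : nat -> nat) (x : R) (n : nat) :
  (1 < B)%nat -> is_base_expansion B a x ->
  INR (digits_value a B n) / INR (B ^ n) <= x <= INR (S (digits_value a B n)) / INR (B ^ n).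
Proof.
  intros HB [Hdig Hsum].
  apply (Un_cv_le_bounds _ _ _ _ (CV_shift' _ n _ Hsum)); intro k.
  rewrite partial_sum_digits_value by lia.
  replace (S (k + n)) with (n + S k)%nat by lia.
  pose proof (digits_value_extend_bounds a B n (S k) Hdig).
  assert (0 < B ^ n)%nat by (apply Nat.neq_0_lt_0, Nat.pow_nonzero; lia).
  assert (0 < B ^ (n + S k))%nat by (apply Nat.neq_0_lt_0, Nat.pow_nonzero; lia).
  rewrite Nat.pow_add_r in *.
  split; apply INR_div_le_iff; nia.
Qed.

Lemma base_expansion_recip_digits_value (B m : nat) (a : nat -> nat) (n : nat) :
  (1 < B)%nat -> (1 < m)%nat -> Nat.gcd B m = 1%nat ->
  is_base_expansion B a (1 / INR m) -> digits_value a B n = (B ^ n / m)%nat.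
Proof.
  intros HB Hm Hg Hexp.
  destruct (base_expansion_digits_value_bounds B a _ n HB Hexp) as [Hlo Hhi].
  change (1 / INR m) with (INR 1 / INR m) in Hlo, Hhi.
  assert (0 < B ^ n)%nat by (apply Nat.neq_0_lt_0, Nat.pow_nonzero; lia).
  apply INR_div_le_iff in Hlo, Hhi; try lia.
  assert (B ^ n <> m * S (digits_value a B n))%nat.
  { intro E; apply (not_divide_pow_coprime B m n Hm Hg); exists (S (digits_value a B n)); lia. }
  apply Nat.div_unique with (B ^ n - m * digits_value a B n)%nat; lia.
Qed.

Lemma base_expansion_recip_unique (B m : nat) (a : nat -> nat) :
  (1 < B)%nat -> (1 < m)%nat -> Nat.gcd B m = 1%nat ->
  is_base_expansion B a (1 / INR m) ->
  forall i, (1 <= i)%nat -> a i = recip_digit m B i.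
Proof.
  intros HB Hm Hg Hexp [|n] Hi; [lia|].
  pose proof (base_expansion_recip_digits_value B m a n HB Hm Hg Hexp).
  pose proof (base_expansion_recip_digits_value B m a (S n) HB Hm Hg Hexp).
  pose proof (digits_value_recip_digit m B n Hm).
  pose proof (digits_value_recip_digit m B (S n) Hm).
  simpl digits_value in *; lia.
Qed.

Theorem theorem1 (b m : nat) (a : nat -> nat) :
  (1 < b)%nat -> (1 < m)%nat -> Nat.gcd b m = 1%nat ->
  is_base_expansion b a (1 / INR m) ->
  forall t : nat, (1 <= t)%nat ->
    is_base_expansion (b + m * t)
      (fun i => (a i + t * ((b ^ (i - 1)) mod m))%nat) (1 / INR m).
Proof.
  intros Hb Hm Hg Hexp t _.
  apply is_base_expansion_ext with (recip_digit m (b + m * t)).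
  - intros i Hi.
    rewrite recip_digit_add_mul, (base_expansion_recip_unique b m a Hb Hm Hg Hexp i Hi) by lia.
    reflexivity.
  - apply is_base_expansion_recip; lia.
Qed.
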